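(* Let $m_1,\ldots,m_s$ be positive integers. Put $a_1=(m_1,\ldots,m_s)$, $a_k=[m_{k-1},(m_k,\ldots,m_s)]$ for $k=2,\ldots,s-1$, and $a_s=[m_{s-1},m_s]$ (when $s\ge2$). Then $$\mathbb{Z}_{m_1}\times\cdots\times\mathbb{Z}_{m_s}\cong\mathbb{Z}_{a_1}\times\cdots\times\mathbb{Z}_{a_s}.$$
   Context: $\mathbb{Z}_m$ denotes a cyclic group of order $m$; $(\cdot,\ldots,\cdot)$ and $[\cdot,\ldots,\cdot]$ denote gcd and lcm. *)

From HB Require Import structures.
From mathcomp Require Import all_boot all_order all_algebra.
Set Implicit Arguments. Unset Strict Implicit. Unset Printing Implicit Defensive.
Import GRing.Theory.

(* Z_n as the ring/additive group of integers mod n, for n >= 1: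
   'I_n.-1.+1 carries the canonical Zp zmodType structure; when 0 < n it is
   exactly Z/nZ (for n = 1 it is the trivial group). *)
Definition cyc (n : nat) : zmodType := 'I_n.-1.+1.

(* The direct product Z_{m 1} x ... x Z_{m s} (indices 1..s), as dependent
   finite functions, with componentwise addition. *)
Definition cycprod (s : nat) (m : nat -> nat) :=
  {dffun forall i : 'I_s, cyc (m i.+1)}.

Definition cycprod_add (s : nat) (m : nat -> nat) (x y : cycprod s m) :
  cycprod s m := [ffun i => (x i + y i)%R].

Definition cycprod_iso (s t : nat) (m n : nat -> nat) : Prop :=
  exists phi : cycprod s m -> cycprod t n,
    bijective phi /\
    forall x y, phi (cycprod_add x y) = cycprod_add (phi x) (phi y).

Definition gcd_from (s : nat) (m : nat -> nat) (k : nat) : nat :=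
  \big[gcdn/0]_(k <= j < s.+1) m j.

Definition a_seq (s : nat) (m : nat -> nat) (k : nat) : nat :=
  if k == 1 then gcd_from s m 1
  else if k == s then lcmn (m s.-1) (m s)
  else lcmn (m k.-1) (gcd_from s m k).

From mathcomp Require Import all_boot all_order all_algebra ring zify.
Import GRing.Theory Num.Theory.
Set Implicit Arguments. Unset Strict Implicit. Unset Printing Implicit Defensive.

(* An integer matrix C induces an isomorphism Z_(m_1) x ... x Z_(m_s) ~ Z_(n_1) x ... x Z_(n_t)
   as soon as the two orders agree and x lies in m_1 Z x ... x m_s Z exactly when C x lies in
   n_1 Z x ... x n_t Z.  With a Bezout relation u p + v q = g = (p, q), the unimodular matrix
   [[u, v], [-q/g, p/g]] has this property for Z_p x Z_q ~ Z_g x Z_[p,q].  Applying it to the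
   coordinates t, t+1 of the stage m_1, ..., m_(t-1), (m_t, ..., m_s), a_(t+1), ..., a_s
   replaces (m_t, (m_(t+1), ..., m_s)) by ((m_t, ..., m_s), a_(t+1)); for t = s-1, ..., 1 this
   walks from (m_1, ..., m_s) to (a_1, ..., a_s). *)

Local Open Scope ring_scope.

Definition cyc_of_int (N : nat) (z : int) : cyc N := inZp `|(z %% N%:Z)%Z|%N.

Section CycOfInt.
Variable N : nat.
Hypothesis N_gt0 : (0 < N)%N.

Lemma val_cyc_of_int z : (val (cyc_of_int N z))%:Z = (z %% N%:Z)%Z.
Proof.
rewrite /= (prednK N_gt0) -modz_nat abszE ger0_norm ?modz_mod //.
by apply: modz_ge0; rewrite eqz_nat -lt0n.
Qed.

Lemma cyc_of_int_val (x : cyc N) : cyc_of_int N (val x)%:Z = x.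
Proof.
apply: val_inj; apply/eqP; rewrite -eqz_nat val_cyc_of_int modz_nat modn_small //=.
by rewrite -[X in (_ < X)%N](prednK N_gt0).
Qed.

Lemma eq_cyc_of_int a b : (cyc_of_int N a == cyc_of_int N b) = (N%:Z %| a - b)%Z.
Proof. by rewrite -val_eqE -eqz_nat !val_cyc_of_int eqz_mod_dvd. Qed.

Lemma val_cycD (x y : cyc N) : (val (x + y))%:Z = (((val x)%:Z + (val y)%:Z) %% N%:Z)%Z.
Proof. by rewrite /=; move: (val x) (val y) => a b; rewrite (prednK N_gt0) -modz_nat. Qed.

Lemma cyc_of_intD a b : cyc_of_int N (a + b) = cyc_of_int N a + cyc_of_int N b.
Proof.
apply/eqP; rewrite -[X in _ == X]cyc_of_int_val eq_cyc_of_int val_cycD !val_cyc_of_int.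
by rewrite -eqz_mod_dvd modz_mod modzDm.
Qed.

Lemma dvdz_val_cycD (x y : cyc N) :
  (N%:Z %| (val (x + y))%:Z - ((val x)%:Z + (val y)%:Z))%Z.
Proof. by rewrite -eqz_mod_dvd val_cycD modz_mod. Qed.

End CycOfInt.

Lemma card_cycprod s m : (forall i : 'I_s, 0 < m i.+1)%N ->
  #|{: cycprod s m}| = (\prod_(i < s) m i.+1)%N.
Proof.
move=> m_gt0; rewrite card_dep_ffun foldrE big_map big_enum /=.
by apply: eq_bigr => i _; rewrite card_ord prednK.
Qed.

Lemma cycprod_iso_trans s t u m n p :
  cycprod_iso s t m n -> cycprod_iso t u n p -> cycprod_iso s u m p.
Proof.
move=> [f [f_bij fD]] [g [g_bij gD]]; exists (g \o f); split; first exact: bij_comp.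
by move=> x y /=; rewrite fD gD.
Qed.

Section IntegerMatrixIso.
Variables (s t : nat) (m n : nat -> nat) (c : 'I_t -> 'I_s -> int).
Hypotheses (m_gt0 : forall j : 'I_s, (0 < m j.+1)%N)
           (n_gt0 : forall i : 'I_t, (0 < n i.+1)%N).
Hypothesis prod_eq : (\prod_(j < s) m j.+1 = \prod_(i < t) n i.+1)%N.
Hypothesis lattice_preimage : forall x : 'I_s -> int,
  (forall i, ((n i.+1)%:Z %| \sum_j c i j * x j)%Z) <-> (forall j, ((m j.+1)%:Z %| x j)%Z).

Definition intmx_map (x : cycprod s m) : cycprod t n :=
  [ffun i : 'I_t => cyc_of_int (n i.+1) (\sum_j c i j * (val (x j))%:Z)].

Lemma intmx_map_inj : injective intmx_map.
Proof.
move=> x y /ffunP xy; apply/ffunP => j.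
rewrite -[x j](cyc_of_int_val (m_gt0 j)) -[y j](cyc_of_int_val (m_gt0 j)).
apply/eqP; rewrite eq_cyc_of_int //; move: j.
apply/(lattice_preimage (fun j => (val (x j))%:Z - (val (y j))%:Z)) => i.
have /eqP := xy i; rewrite !ffunE eq_cyc_of_int // -sumrB.
by under eq_bigr do rewrite -mulrBr.
Qed.

Lemma intmx_mapD x y :
  intmx_map (cycprod_add x y) = cycprod_add (intmx_map x) (intmx_map y).
Proof.
apply/ffunP => i; rewrite !ffunE -cyc_of_intD //; apply/eqP.
rewrite eq_cyc_of_int // -big_split -sumrB /=.
under eq_bigr do rewrite -mulrDr -mulrBr ffunE.
move: i; apply/lattice_preimage => j; exact: dvdz_val_cycD.
Qed.

Lemma cycprod_iso_intmx : cycprod_iso s t m n.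
Proof.
exists intmx_map; split; last exact: intmx_mapD.
by apply: inj_card_bij intmx_map_inj _; rewrite !card_cycprod // prod_eq.
Qed.

End IntegerMatrixIso.

Lemma gcd_lcm_unimodular (p q : nat) : (0 < gcdn p q)%N ->
  exists u v : int, forall x y : int,
    ((gcdn p q)%:Z %| u * x + v * y)%Z
      && ((lcmn p q)%:Z %| (p %/ gcdn p q)%:Z * y - (q %/ gcdn p q)%:Z * x)%Z
    = (p%:Z %| x)%Z && (q%:Z %| y)%Z.
Proof.
set g := gcdn p q; set l := lcmn p q => g_gt0.
set p' := (p %/ g)%:Z; set q' := (q %/ g)%:Z.
have p_eq : p%:Z = p' * g%:Z by rewrite -PoszM divnK ?dvdn_gcdl.
have q_eq : q%:Z = q' * g%:Z by rewrite -PoszM divnK ?dvdn_gcdr.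
have lp_eq : l%:Z = q' * p%:Z by rewrite -PoszM mulnC muln_divA ?dvdn_gcdr.
have lq_eq : l%:Z = p' * q%:Z.
  by rewrite -PoszM mulnC muln_divA ?dvdn_gcdl // mulnC.
have gp : (g%:Z %| p%:Z)%Z := dvdn_gcdl p q.
have gq : (g%:Z %| q%:Z)%Z := dvdn_gcdr p q.
have pl : (p%:Z %| l%:Z)%Z := dvdn_lcml p q.
have ql : (q%:Z %| l%:Z)%Z := dvdn_lcmr p q.
have [u [v /= uv]] := Bezoutz p q.
have bezout_quot : p' * u + q' * v = 1.
  apply: (@mulfI _ g%:Z); first by rewrite eqz_nat -lt0n.
  by rewrite mulr1 -[RHS]uv p_eq q_eq; ring.
exists u, v => x y; apply/andP/andP => [[gxy lxy] | [px qy]]; last first.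
  split.
    by apply: rpredD; apply: dvdz_mull; [apply: dvdz_trans gp px | apply: dvdz_trans gq qy].
  apply: rpredB; [rewrite lq_eq | rewrite lp_eq]; exact: dvdz_mul (dvdzz _) _.
have x_eq : x = p' * (u * x + v * y) - v * (p' * y - q' * x).
  by rewrite -[LHS]mul1r -bezout_quot; ring.
have y_eq : y = q' * (u * x + v * y) + u * (p' * y - q' * x).
  by rewrite -[LHS]mul1r -bezout_quot; ring.
split; [rewrite x_eq; apply: rpredB | rewrite y_eq; apply: rpredD].
- by rewrite p_eq; apply: dvdz_mul.
- exact: dvdz_mull (dvdz_trans pl lxy).
- by rewrite q_eq; apply: dvdz_mul.
- exact: dvdz_mull (dvdz_trans ql lxy).
Qed.

Lemma sum_delta_mul (I : finType) (R : pzSemiRingType) (k : I) (F : I -> R) :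
  \sum_j (j == k)%:R * F j = F k.
Proof.
rewrite (bigD1 k) //= eqxx mul1r big1 ?addr0 // => j /negbTE ->.
by rewrite mul0r.
Qed.

Section GcdLcmStep.
Variables (s : nat) (m n : nat -> nat) (i0 i1 : 'I_s).
Hypotheses (i01 : i0 != i1) (m_gt0 : forall i : 'I_s, (0 < m i.+1)%N).
Hypotheses (n0 : n i0.+1 = gcdn (m i0.+1) (m i1.+1))
           (n1 : n i1.+1 = lcmn (m i0.+1) (m i1.+1))
           (n_other : forall i : 'I_s, i != i0 -> i != i1 -> n i.+1 = m i.+1).

Lemma gcd_lcm_step_gt0 (i : 'I_s) : (0 < n i.+1)%N.
Proof.
case: (eqVneq i i0) => [->|i0']; first by rewrite n0 gcdn_gt0 m_gt0.
case: (eqVneq i i1) => [->|i1']; first by rewrite n1 lcmn_gt0 !m_gt0.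
by rewrite n_other.
Qed.

Lemma prod_gcd_lcm_step : (\prod_(i < s) m i.+1 = \prod_(i < s) n i.+1)%N.
Proof.
have i10 : i1 != i0 by rewrite eq_sym.
rewrite (bigD1 i0) // (bigD1 i1) //= [RHS](bigD1 i0) // [in RHS](bigD1 i1) //= n0 n1.
rewrite !mulnA [(gcdn _ _ * _)%N]mulnC muln_lcm_gcd; congr (_ * _)%N.
by apply: eq_bigr => i /andP[i0' i1']; rewrite n_other.
Qed.

Lemma cycprod_iso_gcd_lcm : cycprod_iso s s m n.
Proof.
set p := m i0.+1; set q := m i1.+1.
set p' := (p %/ gcdn p q)%:Z; set q' := (q %/ gcdn p q)%:Z.
have [|u [v pairE]] := @gcd_lcm_unimodular p q; first by rewrite gcdn_gt0 m_gt0.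
pose c (i j : 'I_s) : int :=
  if i == i0 then u * (j == i0)%:R + v * (j == i1)%:R
  else if i == i1 then p' * (j == i1)%:R - q' * (j == i0)%:R
  else (j == i)%:R.
have row0 x : \sum_j c i0 j * x j = u * x i0 + v * x i1.
  under eq_bigr do rewrite /c eqxx mulrDl -!mulrA.
  by rewrite big_split -!mulr_sumr !sum_delta_mul.
have row1 x : \sum_j c i1 j * x j = p' * x i1 - q' * x i0.
  under eq_bigr do rewrite /c eqxx eq_sym (negbTE i01) mulrBl -!mulrA.
  by rewrite sumrB -!mulr_sumr !sum_delta_mul.
have row_other i x : i != i0 -> i != i1 -> \sum_j c i j * x j = x i.
  move=> /negbTE i0' /negbTE i1'; rewrite -sum_delta_mul.
  by apply: eq_bigr => j _; rewrite /c i0' i1'.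
apply: (@cycprod_iso_intmx s s m n c) => // [||x].
- exact: gcd_lcm_step_gt0.
- exact: prod_gcd_lcm_step.
have := pairE (x i0) (x i1); rewrite -row0 -row1 -n0 -n1 => {}pairE.
split=> [x_in j | x_in i].
  have /andP[px qy] : ((p%:Z %| x i0) && (q%:Z %| x i1))%Z by rewrite -pairE !x_in.
  case: (eqVneq j i0) => [->//|j0]; case: (eqVneq j i1) => [->//|j1].
  by rewrite -n_other // -row_other // x_in.
have /andP[gx ly] : (((n i0.+1)%:Z %| \sum_j c i0 j * x j)
    && ((n i1.+1)%:Z %| \sum_j c i1 j * x j))%Z by rewrite pairE !x_in.
case: (eqVneq i i0) => [->//|i0']; case: (eqVneq i i1) => [->//|i1'].
by rewrite row_other // n_other.
Qed.

End GcdLcmStep.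

Local Close Scope ring_scope.

Lemma cycprod_iso_eq s (m n : nat -> nat) :
  (forall i : 'I_s, 0 < m i.+1) -> (forall i : 'I_s, n i.+1 = m i.+1) ->
  cycprod_iso s s m n.
Proof.
move=> m_gt0 nm; apply: (@cycprod_iso_intmx s s m n (fun i j => (j == i)%:R%R)) => //.
- by move=> i; rewrite nm.
- by apply: eq_bigr => i _; rewrite nm.
- move=> x; split=> x_in i; [rewrite -nm | rewrite nm];
    by have := x_in i; rewrite sum_delta_mul.
Qed.

Section Stages.
Variables (s : nat) (m : nat -> nat).

Lemma gcd_from_rec t : t <= s -> gcd_from s m t = gcdn (m t) (gcd_from s m t.+1).
Proof. by move=> t_le; rewrite /gcd_from big_ltn // ltnS. Qed.

Lemma gcd_from_last : gcd_from s m s = m s.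
Proof. by rewrite /gcd_from big_nat1. Qed.

Lemma gcd_from_gt0 t : t <= s -> 0 < m t -> 0 < gcd_from s m t.
Proof. by move=> t_le mt_gt0; rewrite gcd_from_rec // gcdn_gt0 mt_gt0. Qed.

Lemma a_seq_lcm k : 1 < k <= s -> a_seq s m k = lcmn (m k.-1) (gcd_from s m k).
Proof.
case/andP=> k_gt1 k_le; rewrite /a_seq gtn_eqF //.
by case: eqP => [-> | //]; rewrite gcd_from_last.
Qed.

Definition a_stage t j :=
  if j < t then m j else if j == t then gcd_from s m t else a_seq s m j.

Lemma a_stage_last j : j <= s -> a_stage s j = m j.
Proof.
rewrite /a_stage leq_eqVlt => /orP[/eqP -> | -> //].
by rewrite ltnn eqxx gcd_from_last.
Qed.

Lemma a_stage_first j : 0 < j -> a_stage 1 j = a_seq s m j.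
Proof.
move=> j_gt0; rewrite /a_stage ltnNge j_gt0 /=.
by case: eqP => // ->; rewrite /a_seq eqxx.
Qed.

Lemma a_stage_other t j : j != t -> j != t.+1 -> a_stage t j = a_stage t.+1 j.
Proof.
move=> j_ne_t j_ne_t1.
by rewrite /a_stage (negbTE j_ne_t) (negbTE j_ne_t1) ltnS (leq_eqVlt j t) (negbTE j_ne_t).
Qed.

Hypothesis m_gt0 : forall i, 1 <= i <= s -> 0 < m i.

Lemma a_seq_gt0 k : 1 <= k <= s -> 0 < a_seq s m k.
Proof.
case/andP=> k_gt0 k_le; have [-> | k_ne1] := eqVneq k 1.
  by rewrite /a_seq eqxx gcd_from_gt0 ?m_gt0 //; lia.
rewrite a_seq_lcm ?lcmn_gt0 ?gcd_from_gt0 ?m_gt0 ?k_le ?andbT //; lia.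
Qed.

Lemma a_stage_gt0 t j : 1 <= j <= s -> 0 < a_stage t j.
Proof.
move=> j_range; rewrite /a_stage.
case: (ltnP j t) => _; first exact: m_gt0.
case: eqP => [<- | _]; last exact: a_seq_gt0.
by case/andP: j_range => j_gt0 j_le; rewrite gcd_from_gt0 ?m_gt0 ?j_gt0.
Qed.

Lemma cycprod_iso_a_stageS t : 0 < t < s -> cycprod_iso s s (a_stage t.+1) (a_stage t).
Proof.
case/andP=> t_gt0 t_lt.
have t1_lt : t.-1 < s by lia.
have stage_gt0 (i : 'I_s) : 0 < a_stage t.+1 i.+1 by rewrite a_stage_gt0 ?ltn_ord.
apply: (@cycprod_iso_gcd_lcm s _ _ (Ordinal t1_lt) (Ordinal t_lt)) => //=.
- by apply/eqP => /(congr1 val) /=; lia.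
- by rewrite prednK // /a_stage !ltnn ltnSn !eqxx gcd_from_rec // ltnW.
- rewrite prednK // /a_stage ltnn eqxx ltnSn ltnNge leqnSn /= gtn_eqF //.
  by rewrite a_seq_lcm //= ltnS t_gt0.
move=> i i_ne0 i_ne1; apply: a_stage_other.
  by apply: contraNneq i_ne0 => e; apply/eqP/val_inj => /=; lia.
by apply: contraNneq i_ne1 => e; apply/eqP/val_inj => /=; lia.
Qed.

Lemma cycprod_iso_a_stage t : 0 < t <= s -> cycprod_iso s s m (a_stage t).
Proof.
case/andP=> t_gt0 t_le; rewrite -(subKn t_le).
have : s - t < s by lia.
elim: (s - t) => [_ | d IH d_lt].
  rewrite subn0; apply: cycprod_iso_eq => i; first by rewrite m_gt0 ?ltn_ord.
  by rewrite a_stage_last ?ltn_ord.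
apply: cycprod_iso_trans (IH (ltnW d_lt)) _.
have -> : s - d = (s - d.+1).+1 by lia.
apply: cycprod_iso_a_stageS; lia.
Qed.

End Stages.

Theorem proposition1 (s : nat) (m : nat -> nat) :
  0 < s ->
  (forall i, 1 <= i <= s -> 0 < m i) ->
  cycprod_iso s s m (a_seq s m).
Proof.
move=> s_gt0 m_gt0.
apply: cycprod_iso_trans (cycprod_iso_a_stage m_gt0 (t := 1) _) _; first by rewrite s_gt0.
apply: cycprod_iso_eq => i; first by rewrite a_stage_gt0 ?ltn_ord.
by rewrite a_stage_first.
Qed.
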